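(* Let $A$ be an AUF algebra. Then: 1. For each primitive idempotent $e\in A$, the quotient map $Ae\to Ae/\mathrm{rad}(Ae)$ is a projective cover of the irreducible coherent left $A$-module $Ae/\mathrm{rad}(Ae)$. 2. Every irreducible quasicoherent left $A$-module is isomorphic to $Ae/\mathrm{rad}(Ae)$ for some primitive idempotent $e\in A$. 3. For primitive idempotents $e,f\in A$, the following are equivalent: (a) $Ae\simeq Af$ as left $A$-modules; (b) $Ae/\mathrm{rad}(Ae)\simeq Af/\mathrm{rad}(Af)$ as left $A$-modules; (c) there is a partial isometry in $A$ from $e$ to $f$.
   Context: All algebras are associative $\mathbb C$-algebras, not necessarily unital. An idempotent is $e$ with $e^2=e$; for idempotents, $f\le e$ means $ef=fe=f$; a nonzero idempotent $e$ is primitive if the only idempotents $f\le e$ are $0$ and $e$. An algebra $A$ is AUF if there is a family $(e_i)_{i\in\mathfrak I}$ of mutually orthogonal idempotents with $\dim e_iAe_j<\infty$ and $A=\sum_{i,j}e_iAe_j$. A left $A$-module $M$ is quasicoherent if $\xi\in A\xi$ for all $\xi\in M$, coherent if moreover finitely generated. Irreducible means nonzero with no nonzero proper submodules. For a primitive idempotent $e$ of an AUF algebra $A$, the module $Ae$ has a unique maximal proper left $A$-submodule, denoted $\mathrm{rad}(Ae)$. A submodule $K\le P$ is superfluous if every submodule $L\le P$ with $K+L=P$ satisfies $L=P$; a projective cover of $N$ is an epimorphism $P\to N$ with $P$ a projective left $A$-module and superfluous kernel. A partial isometry from $e$ to $f$ is a $u\in eAf$ for which there is $v\in fAe$ with $uv=e$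 and $vu=f$. *)

From HB Require Import structures.
From mathcomp Require Import all_boot all_order all_algebra.
From mathcomp Require Import complex.
From mathcomp Require Import Rstruct.
Set Implicit Arguments. Unset Strict Implicit. Unset Printing Implicit Defensive.
Import GRing.Theory.
Local Open Scope ring_scope.

Notation CC := (complex Rdefinitions.R).

HB.mixin Record Lmodule_isNUAlgebra A of GRing.Lmodule CC A := {
  amul : A -> A -> A;
  amulA : forall x y z, amul x (amul y z) = amul (amul x y) z;
  amulDl : forall x y z, amul (x + y) z = amul x z + amul y z;
  amulDr : forall x y z, amul x (y + z) = amul x y + amul x z;
  amulZl : forall (k : CC) x y, amul (k *: x) y = k *: amul x y;
  amulZr : forall (k : CC) x y, amul x (k *: y) = k *: amul x y
}.
#[short(type="nualgType")]
HB.structure Definition NUAlgebra := {A of Lmodule_isNUAlgebra A & GRing.Lmodule CC A}.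

HB.mixin Record Lmodule_isNUModule (A : nualgType) M of GRing.Lmodule CC M := {
  act : A -> M -> M;
  actA : forall a b m, act (amul a b) m = act a (act b m);
  actDl : forall a b m, act (a + b) m = act a m + act b m;
  actDr : forall a m n, act a (m + n) = act a m + act a n;
  actZl : forall (k : CC) a m, act (k *: a) m = k *: act a m;
  actZr : forall (k : CC) a m, act a (k *: m) = k *: act a m
}.
#[short(type="numodType")]
HB.structure Definition NUModule (A : nualgType) :=
  {M of Lmodule_isNUModule A M & GRing.Lmodule CC M}.

Section AlgebraNotions.
Variable A : nualgType.

Definition idempotent (e : A) := amul e e = e.

Definition idem_le (f e : A) := amul e f = f /\ amul f e = f.

Definition primitive (e : A) :=
  [/\ idempotent e, e <> 0 &
      forall f, idempotent f -> idem_le f e -> f = 0 \/ f = e].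

Definition fin_dim (P : A -> Prop) :=
  exists s : seq A, forall x, P x ->
    exists c : 'I_(size s) -> CC, x = \sum_(i < size s) c i *: s`_i.

Definition corner (e f : A) : A -> Prop := fun x => exists a, x = amul (amul e a) f.

Definition AUF :=
  exists (I : Type) (E : I -> A),
    [/\ forall i, idempotent (E i),
        forall i j, i <> j -> amul (E i) (E j) = 0,
        forall i j, fin_dim (corner (E i) (E j)) &
        forall a : A, exists s : seq ((I * I) * A),
          (forall p, List.In p s -> corner (E p.1.1) (E p.1.2) p.2) /\
          a = \sum_(p <- s) p.2].

Definition partial_isometry (u e f : A) :=
  corner e f u /\
  exists v, corner f e v /\ amul u v = e /\ amul v u = f.

End AlgebraNotions.

Section ModuleNotions.
Variable A : nualgType.

Definition submodule (M : numodType A) (S : M -> Prop) :=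
  [/\ S 0, forall x y, S x -> S y -> S (x + y),
      forall (k : CC) x, S x -> S (k *: x) &
      forall (a : A) x, S x -> S (act a x)].

Definition proper (M : numodType A) (S : M -> Prop) := exists x, ~ S x.

Definition quasicoherent (M : numodType A) := forall x : M, exists a : A, act a x = x.

Definition generated (M : numodType A) (s : seq M) : M -> Prop :=
  fun x => forall S, submodule S -> (forall y, List.In y s -> S y) -> S x.

Definition fin_generated (M : numodType A) :=
  exists s : seq M, forall x, generated s x.

Definition coherent (M : numodType A) := quasicoherent M /\ fin_generated M.

Definition irreducible (M : numodType A) :=
  (exists x : M, x <> 0) /\
  forall S : M -> Prop, submodule S -> (forall x, S x -> x = 0) \/ (forall x, S x).

Definition is_hom (M N : numodType A) (f : M -> N) :=
  (forall (k : CC) x y, f (k *: x + y) = k *: f x + f y) /\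
  (forall (a : A) x, f (act a x) = act a (f x)).

Definition isomorphic (M N : numodType A) :=
  exists f : M -> N, is_hom f /\ bijective f.

Definition projective (P : numodType A) :=
  forall (M N : numodType A) (g : M -> N) (h : P -> N),
    is_hom g -> (forall y, exists x, g x = y) -> is_hom h ->
    exists k : P -> M, is_hom k /\ forall x, g (k x) = h x.

Definition superfluous (P : numodType A) (K : P -> Prop) :=
  forall L : P -> Prop, submodule L ->
    (forall x, exists k l, K k /\ L l /\ x = k + l) -> forall x, L x.

Definition kernel (M N : numodType A) (f : M -> N) : M -> Prop := fun x => f x = 0.

Definition projective_cover (P N : numodType A) (p : P -> N) :=
  [/\ projective P, is_hom p, (forall y, exists x, p x = y) & superfluous (kernel p)].

Definition maximal_proper (M : numodType A) (S : M -> Prop) :=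
  [/\ submodule S, proper S &
      forall T, submodule T -> proper T -> (forall x, S x -> T x) -> forall x, T x -> S x].

(* radical: intersection of the maximal proper submodules (for Ae with e
   primitive this is its unique maximal proper submodule rad(Ae)) *)
Definition mrad (M : numodType A) : M -> Prop :=
  fun x => forall S, maximal_proper S -> S x.

(* p : M -> N is (up to isomorphism) the quotient map M -> M / K *)
Definition quotient_map (M N : numodType A) (K : M -> Prop) (p : M -> N) :=
  [/\ is_hom p, (forall y, exists x, p x = y) & forall x, p x = 0 <-> K x].

End ModuleNotions.

Section LeftIdeal.
Variables (A : nualgType) (e : A).

(* for e idempotent, A e = { x | x e = x } *)
Definition Ae_pred : {pred A} := fun x => amul x e == x.

Lemma amul0l (x : A) : amul 0 x = 0.
Proof. by rewrite -[X in amul X _](scale0r 0) amulZl scale0r. Qed.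

Fact Ae_closed : GRing.subsemimod_closed Ae_pred.
Proof.
split; [split|].
- by rewrite unfold_in /= amul0l.
- by move=> x y; rewrite !unfold_in /= amulDl => /eqP -> /eqP ->.
- by move=> k x; rewrite !unfold_in /= amulZl => /eqP ->.
Qed.
HB.instance Definition _ := GRing.isSubmodClosed.Build CC A Ae_pred Ae_closed.

Inductive AeT : predArgType := MkAe (x : A) of x \in Ae_pred.
Definition Ae_val (u : AeT) := let: MkAe x _ := u in x.
HB.instance Definition _ := [isSub of AeT for Ae_val].
HB.instance Definition _ := [Choice of AeT by <:].
HB.instance Definition _ := [SubChoice_isSubZmodule of AeT by <:].
HB.instance Definition _ := [SubZmodule_isSubLmodule of AeT by <:].

Fact Ae_act_in (a : A) (u : AeT) : amul a (Ae_val u) \in Ae_pred.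
Proof.
case: u => x /= Hx; rewrite unfold_in /= -amulA.
by move: Hx; rewrite unfold_in /= => /eqP ->.
Qed.
Definition Ae_act (a : A) (u : AeT) : AeT := MkAe (Ae_act_in a u).

Fact Ae_actA a b u : Ae_act (amul a b) u = Ae_act a (Ae_act b u).
Proof. by apply: val_inj; rewrite /= amulA. Qed.
Fact Ae_actDl a b u : Ae_act (a + b) u = Ae_act a u + Ae_act b u.
Proof. by apply: val_inj; rewrite /= amulDl. Qed.
Fact Ae_actDr a u v : Ae_act a (u + v) = Ae_act a u + Ae_act a v.
Proof. by apply: val_inj; rewrite /= amulDr. Qed.
Fact Ae_actZl (k : CC) a u : Ae_act (k *: a) u = k *: Ae_act a u.
Proof. by apply: val_inj; rewrite /= amulZl. Qed.
Fact Ae_actZr (k : CC) a u : Ae_act a (k *: u) = k *: Ae_act a u.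
Proof. by apply: val_inj; rewrite /= amulZr. Qed.

HB.instance Definition _ := Lmodule_isNUModule.Build A AeT
  Ae_actA Ae_actDl Ae_actDr Ae_actZl Ae_actZr.

End LeftIdeal.

Arguments mrad {A} M _.

From Pilot Require Import Defs.
From Stdlib Require Import Classical ClassicalEpsilon FunctionalExtensionality PropExtensionality.
From HB Require Import structures.
From mathcomp Require Import all_boot all_order all_algebra.
From mathcomp Require Import complex Rstruct zify.
Set Implicit Arguments. Unset Strict Implicit. Unset Printing Implicit Defensive.
Import GRing.Theory.
Local Open Scope ring_scope.

(* Since A is AUF, every corner eAe is finite dimensional, so by Fitting's
   argument an element of eAe, for e primitive, is either nilpotent or left
   invertible there.  Consequently the u in Ae with e A u nilpotent form a
   submodule rad(Ae) containing every proper submodule: it is the unique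
   maximal submodule, it is superfluous, and Ae -> Ae/rad(Ae) is a projective
   cover of a simple module.  An irreducible quasicoherent M is not killed by
   some idempotent E; splitting E into orthogonal idempotents must stop, by
   finite dimensionality of EAE, at a primitive e with eM <> 0, and u |-> u e m
   identifies Ae/rad(Ae) with M.  Finally, lifting a common quotient of Ae and
   Af gives u in eAf and v in fAe with uv in e + rad, so uv is invertible in
   eAe and correcting u yields a partial isometry; right multiplication by a
   partial isometry is an isomorphism Ae ~ Af. *)

Section AlgebraArith.
Variable A : nualgType.
Implicit Types x y z : A.

Lemma amul0r x : amul x 0 = 0.
Proof. by rewrite -[X in amul _ X](scale0r 0) amulZr scale0r. Qed.
Lemma amulNl x y : amul (- x) y = - amul x y.
Proof. by rewrite -scaleN1r amulZl scaleN1r. Qed.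
Lemma amulNr x y : amul x (- y) = - amul x y.
Proof. by rewrite -scaleN1r amulZr scaleN1r. Qed.
Lemma amulBl x y z : amul (x - y) z = amul x z - amul y z.
Proof. by rewrite amulDl amulNl. Qed.
Lemma amulBr x y z : amul x (y - z) = amul x y - amul x z.
Proof. by rewrite amulDr amulNr. Qed.
Lemma amul_suml I (r : seq I) (P : pred I) (F : I -> A) x :
  amul (\sum_(i <- r | P i) F i) x = \sum_(i <- r | P i) amul (F i) x.
Proof. by elim/big_rec2: _ => [|i y1 y2 _ <-]; rewrite ?amul0l ?amulDl. Qed.
Lemma amul_sumr I (r : seq I) (P : pred I) (F : I -> A) x :
  amul x (\sum_(i <- r | P i) F i) = \sum_(i <- r | P i) amul x (F i).
Proof. by elim/big_rec2: _ => [|i y1 y2 _ <-]; rewrite ?amul0r ?amulDr. Qed.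

Lemma corner_idl (e f x : A) : Defs.idempotent e -> corner e f x -> amul e x = x.
Proof. by move=> He [a ->]; rewrite !amulA He. Qed.
Lemma corner_idr (e f x : A) : Defs.idempotent f -> corner e f x -> amul x f = x.
Proof. by move=> Hf [a ->]; rewrite -amulA Hf. Qed.

Lemma corner_mul (e f e' f' x y a : A) : corner e f x -> corner e' f' y ->
  corner e f' (amul (amul x a) y).
Proof.
by move=> [b ->] [c ->]; exists (amul (amul (amul b f) a) (amul e' c)); rewrite !amulA.
Qed.

End AlgebraArith.

(** * Corner algebras and Fitting's lemma *)

(* The corner eAe is a unital algebra with unit e; [cpow e x n] is the n-th
   power of x computed there, so that [cpow e x 0 = e]. *)
Section CornerAlgebra.
Variables (A : nualgType) (e : A).
Implicit Types x y z : A.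

Definition in_corner x := amul e x = x /\ amul x e = x.

Fixpoint cpow x n := if n is n'.+1 then amul x (cpow x n') else e.

Definition cnilpotent x := exists n, cpow x n = 0.

Lemma in_corner_corner x : in_corner x -> corner e e x.
Proof. by move=> [Hl Hr]; exists x; rewrite Hl Hr. Qed.

Hypothesis He : Defs.idempotent e.

Lemma in_corner_e : in_corner e. Proof. by split. Qed.

Lemma in_corner_eae a : in_corner (amul (amul e a) e).
Proof. by split; rewrite ?amulA ?He // -amulA He. Qed.

Lemma in_corner_mul x y : in_corner x -> in_corner y -> in_corner (amul x y).
Proof. by move=> [Hx _] [_ Hy]; split; rewrite ?amulA ?Hx // -amulA Hy. Qed.

Lemma in_corner_add x y : in_corner x -> in_corner y -> in_corner (x + y).
Proof. by move=> [? ?] [? ?]; split; rewrite ?amulDl ?amulDr; congr (_ + _). Qed.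

Lemma in_corner_scale k x : in_corner x -> in_corner (k *: x).
Proof. by move=> [? ?]; split; rewrite ?amulZl ?amulZr; congr (_ *: _). Qed.

Lemma in_corner_sum I (r : seq I) (F : I -> A) :
  (forall i, in_corner (F i)) -> in_corner (\sum_(i <- r) F i).
Proof.
move=> HF; elim/big_rec: _ => [|i y _]; last exact: in_corner_add.
by split; rewrite ?amul0l ?amul0r.
Qed.

Lemma cpow_in_corner x n : in_corner x -> in_corner (cpow x n).
Proof.
by move=> Hx; elim: n => [|n IH]; [exact: in_corner_e | exact: in_corner_mul].
Qed.

Lemma cpowSr x n : in_corner x -> cpow x n.+1 = amul (cpow x n) x.
Proof.
move=> [Hl Hr]; elim: n => [|n IH] /=; first by rewrite Hl Hr.
by rewrite -amulA -IH.
Qed.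

Lemma cpowD x m n : in_corner x -> amul (cpow x m) (cpow x n) = cpow x (m + n).
Proof.
move=> Hx; elim: m => [|m IH] /=; first by case: (cpow_in_corner n Hx).
by rewrite -amulA IH.
Qed.

Lemma cpow_e n : cpow e n = e.
Proof. by elim: n => [|n IH] //=; rewrite IH He. Qed.

Lemma commr_cpow x y n : in_corner x -> amul x y = amul y x ->
  amul x (cpow y n) = amul (cpow y n) x.
Proof.
move=> [Hl Hr] Hxy; elim: n => [|n IH] /=; first by rewrite Hl Hr.
by rewrite amulA Hxy -amulA IH amulA.
Qed.

Lemma cpowMn x y n : in_corner y -> amul x y = amul y x ->
  cpow (amul x y) n = amul (cpow x n) (cpow y n).
Proof.
move=> Hy Hxy; elim: n => [|n IH] /=; first by rewrite He.
by rewrite IH -!amulA; congr amul; rewrite !amulA (commr_cpow n Hy).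
Qed.

Lemma cpowZ k x n : cpow (k *: x) n = k ^+ n *: cpow x n.
Proof.
elim: n => [|n IH] /=; first by rewrite scale1r.
by rewrite IH amulZl amulZr scalerA exprS.
Qed.

Lemma cnilpotentZ k x : cnilpotent x -> cnilpotent (k *: x).
Proof. by move=> [n Hn]; exists n; rewrite cpowZ Hn scaler0. Qed.

Lemma left_inv_not_cnilpotent g x : e <> 0 -> in_corner x -> amul g x = e ->
  ~ cnilpotent x.
Proof.
move=> e0 Hx Hg [n]; elim: n => [|n IH] //= Hn; apply: IH.
have [<- _] := cpow_in_corner n Hx.
by rewrite -Hg -amulA Hn amul0r.
Qed.

(* The geometric series e + x + ... + x^(N-1) is a left inverse of e - x. *)
Lemma left_inv_subr_cnilpotent x : in_corner x -> cnilpotent x ->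
  exists g, amul g (e - x) = e.
Proof.
move=> Hx [N HN]; exists (\sum_(0 <= i < N) cpow x i).
rewrite amulBr !amul_suml.
under eq_bigr => i _ do rewrite (proj2 (cpow_in_corner i Hx)).
under [X in _ - X]eq_bigr => i _ do rewrite -cpowSr //.
by rewrite -opprB -sumrB telescope_sumr // HN sub0r opprK.
Qed.

End CornerAlgebra.

Section Span.
Variable A : nualgType.

(* Coefficients are indexed by [nat] rather than by ['I_(size s)], which
   makes concatenating spanning lists painless. *)
Definition in_span (s : seq A) (x : A) :=
  exists c : nat -> CC, x = \sum_(i < size s) c i *: s`_i.

Lemma fin_dimP (P : A -> Prop) :
  fin_dim P <-> exists s, forall x, P x -> in_span s x.
Proof.
split=> [[s Hs]|[s Hs]]; exists s => x /Hs [c ->].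
  by exists (fun i => oapp c 0 (insub i)); apply: eq_bigr => i _; rewrite valK.
by exists (fun i => c i).
Qed.

Lemma in_span_cat s t x y :
  in_span s x -> in_span t y -> in_span (s ++ t) (x + y).
Proof.
move=> [c ->] [d ->].
exists (fun i => if (i < size s)%N then c i else d (i - size s)%N).
rewrite size_cat big_split_ord /=; congr (_ + _); apply: eq_bigr => i _.
  by rewrite /= ltn_ord nth_cat ltn_ord.
by rewrite /= ltnNge leq_addr /= nth_cat ltnNge leq_addr /= addKn.
Qed.

Lemma in_span_big (I : Type) (r : seq I) (F : I -> A -> A) :
  (forall i, List.In i r -> exists s, forall a, in_span s (F i a)) ->
  exists s, forall a, in_span s (\sum_(i <- r) F i a).
Proof.
elim: r => [|i r IH] H.
  exists [::] => a; exists (fun _ => 0).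
  by rewrite !big_nil big_ord0.
have [s Hs] := H i (or_introl erefl).
have [|t Ht] := IH; first by move=> j Hj; apply: H; right.
by exists (s ++ t) => a; rewrite big_cons; apply: in_span_cat.
Qed.

Lemma in_span_dependent (s : seq A) (m : nat) (x : nat -> A) : (size s < m)%N ->
  (forall i, (i < m)%N -> in_span s (x i)) ->
  exists c : nat -> CC, (exists2 i, (i < m)%N & c i != 0) /\
    \sum_(0 <= i < m) c i *: x i = 0.
Proof.
move=> Hm Hx.
have coef (i : 'I_m) : {c : nat -> CC | x i = \sum_(j < size s) c j *: s`_j}.
  exact/constructive_indefinite_description/Hx.
pose C : 'M[CC]_(m, size s) := \matrix_(i, j) sval (coef i) j.
have [v vC v0] : exists2 v : 'rV_m, v *m C = 0 & v != 0.
  apply: NNPP => Hinj; move: Hm; apply/negP; rewrite -leqNgt.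
  have /eqP <- : row_free C.
    by apply: inj_row_free => v vC; apply: NNPP => v0; apply: Hinj; exists v => //; apply/eqP.
  exact: rank_leq_col.
have [i vi] := rV0Pn _ v0.
exists (fun k => if insub k is Some j then v 0 j else 0); split.
  by exists i; rewrite ?ltn_ord // valK.
rewrite big_mkord.
under eq_bigr => k _ do rewrite valK (svalP (coef k)) scaler_sumr.
rewrite exchange_big big1 //= => j _.
under eq_bigr => k _ do rewrite scalerA.
rewrite -scaler_suml.
have := congr1 (fun M : 'rV_(size s) => M 0 j) vC; rewrite !mxE => vCj.
suff -> : \sum_(k < m) v 0 k * sval (coef k) j = 0 by rewrite scale0r.
by rewrite -[RHS]vCj; apply: eq_bigr => k _; rewrite mxE.
Qed.

End Span.

Section Fitting.
Variables (A : nualgType) (e : A).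
Hypotheses (He : Defs.idempotent e) (Hfin : fin_dim (corner e e)).

(* From a linear dependence among e, z, z^2, ... whose first nonzero
   coefficient sits at k, solve for z^k. *)
Lemma cpow_dependent z : in_corner e z ->
  exists k r, [/\ in_corner e r, amul z r = amul r z &
                  cpow e z k = amul (cpow e z k.+1) r].
Proof.
move=> Hz; have [sp Hsp] := (fin_dimP _).1 Hfin.
have [c [[i0 Hi0 ci0] Hc]] := @in_span_dependent _ sp (size sp).+1 (cpow e z)
  (ltnSn _) (fun i _ => Hsp _ (in_corner_corner (cpow_in_corner He i Hz))).
set m := (size sp).+1 in Hc Hi0.
have [k ck Hmin] := ex_minnP (ex_intro (fun i => c i != 0) i0 ci0).
have km : (k < m)%N := leq_ltn_trans (Hmin _ ci0) Hi0.
have Htail : \sum_(k.+1 <= i < m) c i *: cpow e z i = - (c k *: cpow e z k).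
  move: Hc; rewrite (@big_cat_nat _ _ _ k 0 m _ _ (leq0n k) (ltnW km)) /= big_nat_cond big1.
    by rewrite add0r big_ltn // => /eqP; rewrite addrC addr_eq0 => /eqP.
  move=> i /andP [/andP [_ ik] _].
  have -> : c i = 0 by apply: contraTeq ik => /Hmin; rewrite -leqNgt.
  by rewrite scale0r.
pose r := \sum_(k.+1 <= i < m) (- c i / c k) *: cpow e z (i - k.+1).
exists k, r; split.
- by apply: in_corner_sum => i; apply: in_corner_scale; apply: cpow_in_corner.
- rewrite /r amul_sumr amul_suml; apply: eq_bigr => i _.
  by rewrite amulZr amulZl (commr_cpow _ Hz).
rewrite /r amul_sumr.
rewrite (eq_big_nat _ _ (F2 := fun i => (- (c k)^-1) *: (c i *: cpow e z i))).
  by rewrite -scaler_sumr Htail scalerN scaleNr opprK scalerA mulVf ?scale1r.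
move=> i /andP [ki _]; rewrite amulZr (cpowD He) // subnKC // scalerA.
by rewrite !mulNr mulrC.
Qed.

Lemma cnilpotent_or_left_inv z : primitive e -> in_corner e z ->
  cnilpotent e z \/ exists g, amul g z = e.
Proof.
move=> [_ _ Hprim] Hz.
have [k [r [Hr zr Hk]]] := cpow_dependent Hz.
pose t := amul r z.
have Ht : in_corner e t := in_corner_mul Hr Hz.
have zt : amul (cpow e z k.+1) t = cpow e z k.+1.
  rewrite /t -zr amulA -cpowSr //.
  have -> : cpow e z k.+2 = amul z (cpow e z k.+1) by [].
  by rewrite -amulA -Hk.
have zt_pow n : amul (cpow e z k.+1) (cpow e t n) = cpow e z k.+1.
  elim: n => [|n IH] /=; first by have [] := cpow_in_corner He k.+1 Hz.
  by rewrite amulA zt IH.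
have tpow : cpow e t k.+1 = amul (cpow e r k.+1) (cpow e z k.+1).
  exact: (cpowMn He k.+1 Hz (esym zr)).
have Hid : Defs.idempotent (cpow e t k.+1).
  by rewrite /Defs.idempotent {1}tpow -amulA zt_pow -tpow.
have [tl tr] := cpow_in_corner He k.+1 Ht.
case: (Hprim _ Hid (conj tl tr)) => [t0|te].
  by left; exists k.+1; rewrite -(zt_pow k.+1) t0 amul0r.
right; exists (amul (cpow e r k.+1) (cpow e z k)).
by rewrite -amulA -cpowSr // -tpow.
Qed.

End Fitting.

(** * The radical of Ae *)

Section AeGenerator.
Variables (A : nualgType) (e : A).

Lemma Ae_mulr (u : AeT e) : amul (val u) e = val u.
Proof. by case: u => x /=; rewrite unfold_in => /eqP. Qed.

Hypothesis He : Defs.idempotent e.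

Fact e_in_Ae : e \in Ae_pred e.
Proof. by rewrite unfold_in /= He. Qed.

Definition Ae_gen : AeT e := MkAe e_in_Ae.

Lemma act_Ae_gen (u : AeT e) : act (val u) Ae_gen = u.
Proof. by apply: val_inj; rewrite /= Ae_mulr. Qed.

Lemma act_e_Ae_gen : act e Ae_gen = Ae_gen.
Proof. exact: (act_Ae_gen Ae_gen). Qed.

End AeGenerator.

(* The paper's rad(Ae); for primitive e with eAe finite dimensional it
   contains every proper submodule of Ae. *)
Section RadicalAe.
Variables (A : nualgType) (e : A).

Definition radAe (u : AeT e) := forall a, cnilpotent e (amul e (amul a (val u))).

Hypotheses (Hpe : primitive e) (Hfin : fin_dim (corner e e)).
Let He : Defs.idempotent e. Proof. by case: Hpe. Qed.
Let e0 : e <> 0. Proof. by case: Hpe. Qed.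
Local Notation e1 := (Ae_gen He).

Lemma cnilpotent_mull v y : in_corner e v -> in_corner e y ->
  cnilpotent e y -> cnilpotent e (amul v y).
Proof.
move=> Hv Hy Ny.
case: (cnilpotent_or_left_inv He Hfin Hpe (in_corner_mul Hv Hy)) => // [[g Hg]].
exfalso; apply: (@left_inv_not_cnilpotent _ _ He (amul g v) y e0 Hy _ Ny).
by rewrite -amulA.
Qed.

Lemma cnilpotentD x y : in_corner e x -> in_corner e y ->
  cnilpotent e x -> cnilpotent e y -> cnilpotent e (x + y).
Proof.
move=> Hx Hy Nx Ny.
have Hxy := in_corner_add Hx Hy.
case: (cnilpotent_or_left_inv He Hfin Hpe Hxy) => // [[g Hg]].
pose v := amul (amul e g) e.
have Hv : in_corner e v := in_corner_eae He g.
have vxy : amul v (x + y) = e by rewrite /v -amulA (proj1 Hxy) -amulA Hg He.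
have vx : amul v x = e - amul v y by rewrite -vxy amulDr addrK.
have [g' Hg'] := left_inv_subr_cnilpotent He (in_corner_mul Hv Hy)
  (cnilpotent_mull Hv Hy Ny).
exfalso; apply: (@left_inv_not_cnilpotent _ _ He (amul g' v) x e0 Hx _ Nx).
by rewrite -amulA vx.
Qed.

Lemma in_corner_radAe (u : AeT e) a : in_corner e (amul e (amul a (val u))).
Proof. by have := in_corner_eae He (amul a (val u)); rewrite -!amulA Ae_mulr. Qed.

Lemma submodule_radAe : submodule radAe.
Proof.
split.
- by move=> a; exists 1%N; rewrite /= !amul0r amul0l.
- move=> u v Hu Hv a; rewrite [val _]/= !amulDr.
  by apply: cnilpotentD; [apply: in_corner_radAe | apply: in_corner_radAe | apply: Hu | apply: Hv].
- by move=> k u Hu a; rewrite [val _]/= !amulZr; apply: cnilpotentZ.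
- by move=> b u Hu a; rewrite [val _]/= [amul a _]amulA.
Qed.

Lemma radAe_gen : ~ radAe e1.
Proof. by move=> /(_ e) [n]; rewrite /= !He cpow_e. Qed.

Lemma submodule_full (L : AeT e -> Prop) u : submodule L -> L u -> ~ radAe u ->
  forall w, L w.
Proof.
move=> [_ _ _ Lact] Lu /not_all_ex_not [a Na] w.
case: (cnilpotent_or_left_inv He Hfin Hpe (in_corner_radAe u a)) => // [[g Hg]].
have Le1 : L e1.
  have -> : e1 = act (amul (amul g e) a) u by apply: val_inj; rewrite /= -!amulA.
  exact: Lact.
by rewrite -(act_Ae_gen He w); apply: Lact.
Qed.

Lemma proper_sub_radAe (L : AeT e -> Prop) : submodule L -> Defs.proper L ->
  forall u, L u -> radAe u.
Proof.
move=> HL [w Lw] u Lu; apply: NNPP => nR; exact: Lw (submodule_full HL Lu nR w).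
Qed.

Lemma maximal_radAe : maximal_proper radAe.
Proof.
split; [exact: submodule_radAe | by exists e1; apply: radAe_gen |].
by move=> T HT PT _; apply: proper_sub_radAe.
Qed.

Lemma mradE u : mrad (AeT e) u <-> radAe u.
Proof.
split=> [|Ru S [HS PS Smax]]; first by apply; apply: maximal_radAe.
exact: Smax _ submodule_radAe (ex_intro _ e1 radAe_gen) (proper_sub_radAe HS PS) u Ru.
Qed.

Lemma superfluous_radAe : superfluous radAe.
Proof.
move=> L HL Hsum; have [k [l [Rk [Ll kl]]]] := Hsum e1.
case: (classic (radAe l)) => Rl; last exact: submodule_full HL Ll Rl.
by case: radAe_gen; rewrite kl; case: submodule_radAe => _ RD _ _; apply: RD.
Qed.

End RadicalAe.

(** * Modules, homomorphisms and quotients *)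

Section ActionArith.
Variables (A : nualgType) (M : numodType A).

Lemma act0l (m : M) : act (0 : A) m = 0.
Proof. by rewrite -(scale0r (0 : A)) actZl scale0r. Qed.
Lemma act0r (a : A) : act a (0 : M) = 0.
Proof. by have := actZr 0 a (0 : M); rewrite !scale0r. Qed.
Lemma act_suml I (r : seq I) (F : I -> A) (m : M) :
  act (\sum_(i <- r) F i) m = \sum_(i <- r) act (F i) m.
Proof. by elim/big_rec2: _ => [|i y1 y2 _ <-]; rewrite ?act0l ?actDl. Qed.

End ActionArith.

Section Submodule.
Variables (A : nualgType) (M : numodType A) (S : M -> Prop).
Hypothesis HS : submodule S.

Lemma submod0 : S 0. Proof. by case: HS. Qed.
Lemma submodD x y : S x -> S y -> S (x + y). Proof. by case: HS => _ H _ _; apply: H. Qed.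
Lemma submodZ k x : S x -> S (k *: x). Proof. by case: HS => _ _ H _; apply: H. Qed.
Lemma submodA a x : S x -> S (act a x). Proof. by case: HS => _ _ _ H; apply: H. Qed.
Lemma submodN x : S x -> S (- x). Proof. by rewrite -scaleN1r; apply: submodZ. Qed.
Lemma submodB x y : S x -> S y -> S (x - y).
Proof. by move=> Sx Sy; apply: submodD => //; apply: submodN. Qed.

End Submodule.

Lemma submodule_mrad (A : nualgType) (M : numodType A) : submodule (mrad M).
Proof.
split=> [S [HS _ _]|x y Hx Hy S MS|k x Hx S MS|a x Hx S MS]; first exact: submod0.
- by apply: submodD (Hx _ MS) (Hy _ MS); case: MS.
- by apply: submodZ (Hx _ MS); case: MS.
- by apply: submodA (Hx _ MS); case: MS.
Qed.

Section Homomorphisms.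
Variables (A : nualgType) (M N : numodType A) (g : M -> N).
Hypothesis Hg : is_hom g.

Lemma hom0 : g 0 = 0.
Proof.
have := (proj1 Hg) 1 0 0; rewrite scale1r addr0 scale1r => H.
by apply: (@addrI _ (g 0)); rewrite addr0 -H.
Qed.
Lemma homD x y : g (x + y) = g x + g y.
Proof. by have := (proj1 Hg) 1 x y; rewrite !scale1r. Qed.
Lemma homZ k x : g (k *: x) = k *: g x.
Proof. by have := (proj1 Hg) k x 0; rewrite !addr0 hom0 addr0. Qed.
Lemma homB x y : g (x - y) = g x - g y.
Proof. by rewrite homD -scaleN1r homZ scaleN1r. Qed.
Lemma homA a x : g (act a x) = act a (g x).
Proof. exact: (proj2 Hg). Qed.

Lemma submodule_preim (S : N -> Prop) : submodule S -> submodule (fun x => S (g x)).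
Proof.
move=> HS; split=> [|x y|k x|a x]; rewrite ?hom0 ?homD ?homZ ?homA.
- exact: submod0.
- exact: submodD.
- exact: submodZ.
- exact: submodA.
Qed.

Lemma submodule_image (S : M -> Prop) : submodule S ->
  submodule (fun y => exists2 x, S x & g x = y).
Proof.
move=> HS; split; first by exists 0; rewrite ?hom0 //; apply: submod0.
- move=> _ _ [x Sx <-] [y Sy <-].
  by exists (x + y); rewrite ?homD //; apply: submodD.
- by move=> k _ [x Sx <-]; exists (k *: x); rewrite ?homZ //; apply: submodZ.
- by move=> a _ [x Sx <-]; exists (act a x); rewrite ?homA //; apply: submodA.
Qed.

Lemma submodule_kernel : submodule (kernel g).
Proof.
apply: (submodule_preim (S := fun y => y = 0)).
by split=> [|x y -> ->|k x ->|a x ->]; rewrite ?addr0 ?scaler0 ?act0r.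
Qed.

Lemma is_hom_inv (h : N -> M) : cancel g h -> cancel h g -> is_hom h.
Proof.
move=> gK hK; split=> [k x y|a x]; apply: (can_inj gK).
  by rewrite (proj1 Hg) !hK.
by rewrite homA !hK.
Qed.

Hypothesis g_surj : forall y, exists x, g x = y.

Lemma maximal_kernel : irreducible N -> maximal_proper (kernel g).
Proof.
move=> [[y y0] Nirr]; split; first exact: submodule_kernel.
  by have [x gx] := g_surj y; exists x; rewrite /kernel gx.
move=> T HT [t0 Tt0] kerT.
case: (Nirr _ (submodule_image HT)) => [img0 x Tx|imgT]; first by apply: img0; exists x.
case: Tt0; have [t Tt gt] := imgT (g t0).
have -> : t0 = (t0 - t) + t by rewrite subrK.
by apply: submodD => //; apply: kerT; rewrite /kernel homB // gt subrr.
Qed.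

Lemma irreducible_of_maximal_kernel : maximal_proper (kernel g) -> irreducible N.
Proof.
move=> [HK [x gx] Kmax]; split; first by exists (g x).
move=> S HS; have HSg := submodule_preim HS.
case: (classic (Defs.proper (fun x => S (g x)))) => [PSg|/not_ex_not_all ST].
  left=> y Sy; have [z gz] := g_surj y; subst y.
  by apply: (Kmax _ HSg PSg) => // w ->; apply: submod0.
by right=> y; have [z <-] := g_surj y; apply: ST.
Qed.

End Homomorphisms.

Lemma is_hom_comp (A : nualgType) (M N P : numodType A) (g : M -> N) (h : N -> P) :
  is_hom g -> is_hom h -> is_hom (fun x => h (g x)).
Proof.
move=> Hg Hh; split=> [k x y|a x]; first by rewrite (proj1 Hg) (proj1 Hh).
by rewrite !homA.
Qed.

Section IsoInvariance.
Variables (A : nualgType) (M N : numodType A) (phi : M -> N) (psi : N -> M).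
Hypotheses (Hphi : is_hom phi) (phiK : cancel phi psi) (psiK : cancel psi phi).

Lemma maximal_proper_preim (S : N -> Prop) : maximal_proper S ->
  maximal_proper (fun x => S (phi x)).
Proof.
have Hpsi := is_hom_inv Hphi phiK psiK.
move=> [HS [y Sy] Smax]; split; first exact: submodule_preim.
  by exists (psi y); rewrite psiK.
move=> T HT [x Tx] ST z Tz.
apply: (Smax _ (submodule_preim Hpsi HT)); last by rewrite phiK.
  by exists (phi x); rewrite phiK.
by move=> w Sw; apply: ST; rewrite psiK.
Qed.

End IsoInvariance.

Lemma mrad_iso (A : nualgType) (M N : numodType A) (phi : M -> N) :
  is_hom phi -> bijective phi -> forall x, mrad N (phi x) <-> mrad M x.
Proof.
move=> Hphi [psi phiK psiK] x; have Hpsi := is_hom_inv Hphi phiK psiK.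
split=> Rx S MS; last exact: Rx _ (maximal_proper_preim Hphi phiK psiK MS).
by rewrite -(phiK x); apply: Rx (maximal_proper_preim Hpsi psiK phiK MS).
Qed.

Lemma quotient_map_iso (A : nualgType) (M M' N : numodType A) (psi : M' -> M)
    (p : M -> N) :
  is_hom psi -> bijective psi -> quotient_map (mrad M) p ->
  quotient_map (mrad M') (fun x => p (psi x)).
Proof.
move=> Hpsi bpsi [Hp p_surj pK]; have [phi psiK phiK] := bpsi.
split; first exact: is_hom_comp.
  by move=> y; have [x <-] := p_surj y; exists (phi x); rewrite phiK.
by move=> x; rewrite pK mrad_iso.
Qed.

(* M / S is realised as the set of canonical representatives chosen by
   Hilbert's epsilon in each coset of S. *)
Section QuotientModule.
Variables (A : nualgType) (M : numodType A) (S : M -> Prop).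
Hypothesis HS : submodule S.

Definition qrepr (x : M) : M := epsilon (inhabits 0) (fun y => S (x - y)).

Lemma qreprP x : S (x - qrepr x).
Proof.
apply: (epsilon_spec (inhabits 0) (fun y => S (x - y))).
by exists x; rewrite subrr; apply: (submod0 HS).
Qed.

Lemma qrepr_eq x y : S (x - y) -> qrepr x = qrepr y.
Proof.
move=> Sxy; rewrite /qrepr; congr epsilon.
apply: functional_extensionality => z; apply: propositional_extensionality.
split=> Sz; last by have := submodD HS Sxy Sz; rewrite addrA subrK.
by have := submodB HS Sz Sxy; rewrite opprB addrC addrA subrK.
Qed.

Lemma qrepr_sub x : S (qrepr x - x).
Proof. by rewrite -opprB; apply: (submodN HS (qreprP x)). Qed.

Lemma qreprK x : qrepr (qrepr x) = qrepr x.
Proof. exact/qrepr_eq/qrepr_sub. Qed.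

Definition quot_pred : {pred M} := fun x => qrepr x == x.
Inductive quot : predArgType := MkQuot (x : M) of x \in quot_pred.
Definition quot_val (u : quot) := let: MkQuot x _ := u in x.
HB.instance Definition _ := [isSub of quot for quot_val].
HB.instance Definition _ := [Choice of quot by <:].

Fact qrepr_in x : qrepr x \in quot_pred.
Proof. by rewrite unfold_in /= qreprK. Qed.
Definition qproj x : quot := MkQuot (qrepr_in x).

Lemma qprojK (u : quot) : qproj (val u) = u.
Proof. by case: u => x Hx; apply: val_inj => /=; move: Hx; rewrite unfold_in => /eqP. Qed.

Lemma qproj_eq x y : S (x - y) -> qproj x = qproj y.
Proof. by move=> Sxy; apply: val_inj; rewrite /= (qrepr_eq Sxy). Qed.

Lemma qproj_eqP x y : qproj x = qproj y -> S (x - y).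
Proof.
move=> /(congr1 val) /= xy.
by have := submodB HS (qreprP x) (qreprP y); rewrite xy opprB addrA subrK.
Qed.

Definition qadd (u v : quot) := qproj (val u + val v).
Definition qopp (u : quot) := qproj (- val u).
Definition qscale (k : CC) (u : quot) := qproj (k *: val u).
Definition qact (a : A) (u : quot) := qproj (act a (val u)).

Lemma qaddE x y : qadd (qproj x) (qproj y) = qproj (x + y).
Proof. by apply: qproj_eq; rewrite /= opprD addrACA; apply: (submodD HS); apply: qrepr_sub. Qed.
Lemma qoppE x : qopp (qproj x) = qproj (- x).
Proof. by apply: qproj_eq; rewrite /= -opprD; apply: (submodN HS); apply: qrepr_sub. Qed.
Lemma qscaleE k x : qscale k (qproj x) = qproj (k *: x).
Proof. by apply: qproj_eq; rewrite /= -scalerBr; apply: (submodZ HS); apply: qrepr_sub. Qed.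
Lemma qactE a x : qact a (qproj x) = qproj (act a x).
Proof.
apply: qproj_eq; rewrite /= -scaleN1r -actZr -actDr scaleN1r.
by apply: (submodA HS); apply: qrepr_sub.
Qed.

Lemma qaddA : associative qadd.
Proof. by move=> u v w; rewrite -[u]qprojK -[v]qprojK -[w]qprojK !qaddE addrA. Qed.
Lemma qaddC : commutative qadd.
Proof. by move=> u v; rewrite -[u]qprojK -[v]qprojK !qaddE addrC. Qed.
Lemma qadd0 : left_id (qproj 0) qadd.
Proof. by move=> u; rewrite -[u]qprojK qaddE add0r. Qed.
Lemma qaddN : left_inverse (qproj 0) qopp qadd.
Proof. by move=> u; rewrite -[u]qprojK qoppE qaddE addNr. Qed.

HB.instance Definition _ := GRing.isZmodule.Build quot qaddA qaddC qadd0 qaddN.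

Lemma qscaleA a b u : qscale a (qscale b u) = qscale (a * b) u.
Proof. by rewrite -[u]qprojK !qscaleE scalerA. Qed.
Lemma qscale1 : left_id 1 qscale.
Proof. by move=> u; rewrite -[u]qprojK qscaleE scale1r. Qed.
Lemma qscaleDr : right_distributive qscale qadd.
Proof. by move=> k u v; rewrite -[u]qprojK -[v]qprojK qaddE !qscaleE qaddE scalerDr. Qed.
Lemma qscaleDl u : {morph qscale^~ u : a b / a + b >-> qadd a b}.
Proof. by move=> a b; rewrite -[u]qprojK !qscaleE qaddE scalerDl. Qed.

HB.instance Definition _ :=
  GRing.Zmodule_isLmodule.Build CC quot qscaleA qscale1 qscaleDr qscaleDl.

Lemma qprojD x y : qproj x + qproj y = qproj (x + y). Proof. exact: qaddE. Qed.
Lemma qprojZ k x : k *: qproj x = qproj (k *: x). Proof. exact: qscaleE. Qed.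

Lemma qactA a b u : qact (amul a b) u = qact a (qact b u).
Proof. by rewrite -[u]qprojK !qactE actA. Qed.
Lemma qactDl a b u : qact (a + b) u = qact a u + qact b u.
Proof. by rewrite -[u]qprojK !qactE actDl qprojD. Qed.
Lemma qactDr a u v : qact a (u + v) = qact a u + qact a v.
Proof. by rewrite -[u]qprojK -[v]qprojK qprojD !qactE actDr qprojD. Qed.
Lemma qactZl k a u : qact (k *: a) u = k *: qact a u.
Proof. by rewrite -[u]qprojK !qactE actZl qprojZ. Qed.
Lemma qactZr k a u : qact a (k *: u) = k *: qact a u.
Proof. by rewrite -[u]qprojK qprojZ !qactE actZr qprojZ. Qed.

HB.instance Definition _ :=
  Lmodule_isNUModule.Build A quot qactA qactDl qactDr qactZl qactZr.

Definition quot_module : numodType A := quot.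

Lemma quotient_map_qproj : quotient_map S (qproj : M -> quot_module).
Proof.
split=> [|u|x]; first split=> [k x y|a x].
- by rewrite qprojZ qprojD.
- exact: (esym (qactE a x)).
- by exists (val u); apply: qprojK.
split=> [x0|Sx]; last by apply: qproj_eq; rewrite subr0.
by have := qproj_eqP (x0 : qproj x = qproj 0); rewrite subr0.
Qed.

End QuotientModule.

Lemma quotient_exists (A : nualgType) (M : numodType A) (S : M -> Prop) :
  submodule S -> exists (N : numodType A) (p : M -> N), quotient_map S p.
Proof. by move=> HS; exists (quot_module HS), (qproj HS); apply: quotient_map_qproj. Qed.

(** * AUF algebras and primitive idempotents *)

Lemma eq_big_In (V : nmodType) (T : Type) (s : seq T) (F G : T -> V) :
  (forall p, List.In p s -> F p = G p) -> \sum_(p <- s) F p = \sum_(p <- s) G p.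
Proof.
elim: s => [|p s IH] H; first by rewrite !big_nil.
by rewrite !big_cons H ?IH //; [move=> q Hq; apply: H; right | left].
Qed.

Section AUFAlgebra.
Variable A : nualgType.
Hypothesis HA : AUF A.

Lemma AUF_local_unit (x : A) : exists a, amul a x = x.
Proof.
have [I [E [HE HEorth _ HEsum]]] := HA; have [s [Hs ->]] := HEsum x.
have EC i j : amul (E i) (E j) = amul (E j) (E i).
  by case: (classic (i = j)) => [->//|ij]; rewrite !HEorth //; apply: nesym.
suff [a [_ Ha]] : exists a, (forall j, amul a (E j) = amul (E j) a) /\
    forall p, List.In p s -> amul a p.2 = p.2.
  by exists a; rewrite amul_sumr; apply: eq_big_In.
elim: s Hs => [|p s IH] Hs.
  by exists 0; split=> [j|p []]; rewrite ?amul0l ?amul0r.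
have [|a [aE Ha]] := IH; first by move=> q Hq; apply: Hs; right.
pose F := E p.1.1.
(* a + F - aF is a left unit for F A as well as for everything a fixes *)
exists (a + F - amul a F); split.
  move=> j; rewrite amulBl amulDl amulBr amulDr -!amulA EC.
  by rewrite !amulA aE -!amulA EC aE !amulA.
move=> q [<-|Hq].
  have Fp : amul F p.2 = p.2 by apply: corner_idl (HE _) (Hs p (or_introl _)).
  by rewrite amulBl amulDl -amulA Fp addrAC subrr add0r.
rewrite amulBl amulDl -amulA Ha // [amul a _]amulA aE -amulA Ha //.
by rewrite addrK.
Qed.

Lemma AUF_fin_dim_corner (e : A) : fin_dim (corner e e).
Proof.
have [I [E [_ _ HEfin HEsum]]] := HA; have [s [Hs se]] := HEsum e.
have [sp Hsp] : exists sp, forall a,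
    in_span sp (\sum_(p <- s) \sum_(q <- s) amul (amul p.2 a) q.2).
  apply: in_span_big => p Hp; apply: in_span_big => q Hq.
  have [sp Hsp] := (fin_dimP _).1 (HEfin p.1.1 q.1.2).
  by exists sp => a; apply: Hsp; apply: corner_mul (Hs p Hp) (Hs q Hq).
apply/fin_dimP; exists sp => _ [a ->].
rewrite se !amul_suml; under eq_bigr => p _ do rewrite amul_sumr.
exact: Hsp.
Qed.

Lemma AUF_idempotent_acting (M : numodType A) (m : M) :
  quasicoherent M -> m <> 0 -> exists E : A, Defs.idempotent E /\ act E m <> 0.
Proof.
move=> Qc m0; have [I [E [HE _ _ HEsum]]] := HA.
have [a am] := Qc m; have [s [Hs sa]] := HEsum a.
apply: NNPP => none; apply: m0.
rewrite -am sa act_suml (eq_big_In (G := fun _ => 0)) ?big1 // => p Hp.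
apply: NNPP => pm; apply: none; exists (E p.1.2); split=> // Em; apply: pm.
by rewrite -(corner_idr (HE _) (Hs p Hp)) actA Em act0r.
Qed.

End AUFAlgebra.

Section OrthogonalIdempotents.
Variables (A : nualgType) (E : A).

Definition orth (x y : A) := amul x y = 0 /\ amul y x = 0.

Definition orthogonal_family (g : nat -> A) (k : nat) :=
  (forall i, (i <= k)%N -> [/\ Defs.idempotent (g i), g i <> 0 & in_corner E (g i)]) /\
  (forall i j, (i < j <= k)%N -> orth (g i) (g j)).

Lemma orth_le (x y f : A) : orth y f -> amul f x = x -> amul x f = x -> orth y x.
Proof.
move=> [yf fy] fx xf.
by split; [rewrite -fx amulA yf amul0l | rewrite -xf -amulA fy amul0r].
Qed.

Lemma idempotent_compl (f h : A) : Defs.idempotent f -> Defs.idempotent h ->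
  idem_le h f -> Defs.idempotent (f - h) /\ orth (f - h) h.
Proof.
move=> Hf Hh [fh hf]; rewrite /Defs.idempotent /orth !amulBl !amulBr Hf Hh fh hf.
by rewrite !subrr subr0.
Qed.

Lemma orthogonal_family_split g k (a b : A) :
  orthogonal_family g k -> Defs.idempotent a -> Defs.idempotent b ->
  a <> 0 -> b <> 0 -> orth b a -> a + b = g k ->
  orthogonal_family (fun i => if i == k.+1 then a else if i == k then b else g i) k.+1.
Proof.
move=> [Hg Horth] Ha Hb a0 b0 [ba ab] abg.
have [_ _ [Ef fE]] := Hg k (leqnn k).
have fa : amul (g k) a = a by rewrite -abg amulDl Ha ba addr0.
have af : amul a (g k) = a by rewrite -abg amulDr Ha ab addr0.
have fb : amul (g k) b = b by rewrite -abg amulDl ab add0r Hb.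
have bf : amul b (g k) = b by rewrite -abg amulDr ba add0r Hb.
have sub_corner x : amul (g k) x = x -> amul x (g k) = x -> in_corner E x.
  by move=> fx xf; split; [rewrite -fx amulA Ef | rewrite -xf -amulA fE].
split=> [i ik|i j /andP [ij jk]].
  have [_|ik1] := eqVneq i k.+1; first by split=> //; apply: sub_corner.
  have [_|ik'] := eqVneq i k; first by split=> //; apply: sub_corner.
  by apply: Hg; lia.
rewrite (ltn_eqF (_ : i < k.+1)%N); last by lia.
have [jk1|jk1] := eqVneq j k.+1.
  have [_|ik'] := eqVneq i k; first by split.
  by apply: orth_le fa af; apply: Horth; lia.
have [jk'|jk'] := eqVneq j k.
  rewrite (ltn_eqF (_ : i < k)%N); last by lia.
  by apply: orth_le fb bf; apply: Horth; lia.
rewrite (ltn_eqF (_ : i < k)%N); last by lia.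
by apply: Horth; lia.
Qed.

Hypothesis Hfin : fin_dim (corner E E).

(* Orthogonal nonzero idempotents are linearly independent. *)
Lemma orthogonal_family_bound : exists n, forall g k, orthogonal_family g k -> (k < n)%N.
Proof.
have [sp Hsp] := (fin_dimP _).1 Hfin; exists (size sp) => g k [Hg Horth].
rewrite ltnNge; apply/negP => kn.
have gspan i : (i < k.+1)%N -> in_span sp (g i).
  by move=> ik; have [_ _ /in_corner_corner] := Hg i ik; apply: Hsp.
have [c [[i0 i0k ci0] Hc]] := @in_span_dependent _ sp k.+1 g kn gspan.
have [Hi0 gi0 _] := Hg i0 i0k.
have := congr1 (amul (g i0)) Hc.
rewrite amul_sumr amul0r big_mkord (bigD1 (Ordinal i0k)) //= big1 ?addr0.
  by rewrite amulZr Hi0 => /eqP; rewrite scaler_eq0 (negbTE ci0) => /eqP.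
move=> i ii0; rewrite amulZr.
suff -> : amul (g i0) (g i) = 0 by rewrite scaler0.
have [ii|ii|ii] := ltngtP i i0; last by move: ii0; rewrite -val_eqE /= ii eqxx.
- by have [] := Horth i i0 (introT andP (conj ii i0k)).
- by have [] := Horth i0 i (introT andP (conj ii (ltn_ord i))).
Qed.

Hypothesis HE : Defs.idempotent E.

(* Splitting a non-primitive idempotent into two orthogonal ones, and keeping
   the half on which Q holds, would produce arbitrarily long orthogonal
   families. *)
Lemma primitive_below (Q : A -> Prop) : Q E -> ~ Q 0 ->
  (forall f h, Defs.idempotent f -> Defs.idempotent h -> idem_le h f -> Q f ->
     Q h \/ Q (f - h)) ->
  exists e, primitive e /\ Q e.
Proof.
move=> QE nQ0 Qsplit; apply: NNPP => none.
have [n Hn] := orthogonal_family_bound.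
suff [g [Hg _]] : exists g, orthogonal_family g n /\ Q (g n).
  by have := Hn g n Hg; rewrite ltnn.
elim: n {Hn} => [|k [g [Hg Qgk]]].
  exists (fun _ => E); split=> //; split=> [i _|i j /andP [ij]].
    by split=> // E0; apply: nQ0; rewrite -E0.
  by rewrite leqn0 => /eqP j0; rewrite j0 in ij.
have [Hf f0 _] := Hg.1 k (leqnn k).
have [h [Hh hle h0 hf]] :
    exists h, [/\ Defs.idempotent h, idem_le h (g k), h <> 0 & h <> g k].
  apply: NNPP => Hno; apply: none; exists (g k); split=> //; split=> // h Hh hle.
  by apply: NNPP => /not_or_and [h0 hf]; apply: Hno; exists h.
have [Hh' [h'h hh']] := idempotent_compl Hf Hh hle.
have h'0 : g k - h <> 0 by move/eqP; rewrite subr_eq0 eq_sym => /eqP /hf.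
case: (Qsplit _ _ Hf Hh hle Qgk) => [Qh|Qh'].
  exists (fun i => if i == k.+1 then h else if i == k then g k - h else g i).
  split; last by rewrite eqxx.
  by apply: (orthogonal_family_split Hg Hh Hh' h0 h'0 (conj h'h hh')); rewrite addrC subrK.
exists (fun i => if i == k.+1 then g k - h else if i == k then h else g i).
split; last by rewrite eqxx.
by apply: (orthogonal_family_split Hg Hh' Hh h'0 h0 (conj hh' h'h)); rewrite subrK.
Qed.

End OrthogonalIdempotents.

(** * Projective covers and partial isometries *)

Section AeModule.
Variables (A : nualgType) (e : A).
Hypothesis He : Defs.idempotent e.

Lemma projective_Ae : projective (AeT e).
Proof.
move=> M N g h Hg g_surj Hh; have [m gm] := g_surj (h (Ae_gen He)).
exists (fun u => act (val u) m); split; first split=> [k x y|a x].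
- by rewrite /= actDl actZl.
- by rewrite /= actA.
by move=> u; rewrite homA // gm -homA // act_Ae_gen.
Qed.

Lemma quasicoherent_Ae : (forall x : A, exists a, amul a x = x) ->
  quasicoherent (AeT e).
Proof.
move=> local_unit u; have [a au] := local_unit (val u).
by exists a; apply: val_inj.
Qed.

Variables (N : numodType A) (p : AeT e -> N).
Hypotheses (Hp : is_hom p) (p_surj : forall y, exists x, p x = y).

Lemma fin_generated_image_Ae : fin_generated N.
Proof.
exists [:: p (Ae_gen He)] => y S HS gen; have [u <-] := p_surj y.
by rewrite -(act_Ae_gen He u) homA //; apply: (submodA HS); apply: gen; left.
Qed.

End AeModule.

Lemma quasicoherent_image (A : nualgType) (M N : numodType A) (p : M -> N) :
  is_hom p -> (forall y, exists x, p x = y) -> quasicoherent M -> quasicoherent N.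
Proof.
move=> Hp p_surj QM y; have [x <-] := p_surj y; have [a ax] := QM x.
by exists a; rewrite -homA // ax.
Qed.

Section SimpleTop.
Variables (A : nualgType) (e : A).
Hypotheses (Hpe : primitive e) (Hfin : fin_dim (corner e e)).
Let He : Defs.idempotent e. Proof. by case: Hpe. Qed.

Lemma kernel_quotient_Ae (N : numodType A) (p : AeT e -> N) :
  quotient_map (mrad (AeT e)) p -> kernel p = radAe (e := e).
Proof.
move=> [_ _ pK]; apply: functional_extensionality => u.
by apply: propositional_extensionality; rewrite -mradE //; apply: pK.
Qed.

Lemma projective_cover_Ae (N : numodType A) (p : AeT e -> N) :
  quotient_map (mrad (AeT e)) p -> projective_cover p.
Proof.
move=> Hq; have [Hp p_surj _] := Hq.
split=> //; first exact: projective_Ae He.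
by rewrite (kernel_quotient_Ae Hq); apply: superfluous_radAe.
Qed.

Lemma irreducible_quotient_Ae (N : numodType A) (p : AeT e -> N) :
  quotient_map (mrad (AeT e)) p -> irreducible N.
Proof.
move=> Hq; have [Hp p_surj _] := Hq.
apply: (irreducible_of_maximal_kernel Hp p_surj).
by rewrite (kernel_quotient_Ae Hq); apply: maximal_radAe.
Qed.

Lemma quotient_map_onto (M : numodType A) (m : M) : irreducible M -> act e m <> 0 ->
  exists p : AeT e -> M, quotient_map (mrad (AeT e)) p.
Proof.
move=> Mirr em0; pose p (u : AeT e) := act (val u) (act e m).
have Hp : is_hom p by split=> [k x y|a x]; rewrite /p /= ?actDl ?actZl ?actA.
have pe : p (Ae_gen He) = act e m by rewrite /p /= -actA He.
have p_surj y : exists x, p x = y.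
  have Htop : submodule (fun _ : AeT e => True) by [].
  case: (Mirr.2 _ (submodule_image Hp Htop)) => [img0|imgT].
    by case: em0; rewrite -pe; apply: img0; exists (Ae_gen He).
  by have [x _ px] := imgT y; exists x.
exists p; split=> // u; split=> [pu|Ru]; last by apply: (Ru (kernel p)); apply: maximal_kernel.
apply/mradE => //; apply: proper_sub_radAe (submodule_kernel Hp) _ _ pu => //.
by exists (Ae_gen He); rewrite /kernel pe.
Qed.

End SimpleTop.

Section PartialIsometries.
Variables (A : nualgType) (e f : A).
Hypotheses (He : Defs.idempotent e) (Hf : Defs.idempotent f).

Lemma iso_of_partial_isometry u : partial_isometry u e f ->
  isomorphic (AeT e) (AeT f).
Proof.
move=> [cu [v [cv [uv vu]]]].
have uf : amul u f = u := corner_idr Hf cu.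
have ve : amul v e = v := corner_idr He cv.
have mulu_in (x : AeT e) : amul (val x) u \in Ae_pred f.
  by rewrite unfold_in /= -amulA uf.
have mulv_in (y : AeT f) : amul (val y) v \in Ae_pred e.
  by rewrite unfold_in /= -amulA ve.
exists (fun x => MkAe (mulu_in x)); split.
  by split=> [k x y|a x]; apply: val_inj; rewrite /= ?amulDl ?amulZl ?amulA.
exists (fun y => MkAe (mulv_in y)) => [x|y]; apply: val_inj.
  by rewrite /= -amulA uv Ae_mulr.
by rewrite /= -amulA vu Ae_mulr.
Qed.

Lemma partial_isometry_of_mul u v : e <> 0 -> primitive f ->
  corner e f u -> corner f e v -> amul u v = e -> partial_isometry u e f.
Proof.
move=> e0 [_ _ fprim] cu cv uv; split=> //; exists v; split=> //; split=> //.
have eu : amul e u = u := corner_idl He cu.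
have fv : amul f v = v := corner_idl Hf cv.
have uvu : amul u (amul v u) = u by rewrite amulA uv.
have [vu0|//] : amul v u = 0 \/ amul v u = f.
  apply: fprim.
    by rewrite /Defs.idempotent -amulA [amul u _]amulA uv eu.
  by split; [rewrite amulA fv | rewrite -amulA (corner_idr Hf cu)].
by case: e0; rewrite -uv -uvu vu0 amul0r amul0l.
Qed.

(* If uv is unipotent in eAe then it has a left inverse g in eAe, and
   egu is a partial isometry with the same partner v. *)
Lemma partial_isometry_of_unipotent u v : e <> 0 -> primitive f ->
  corner e f u -> corner f e v -> cnilpotent e (e - amul u v) ->
  exists w, partial_isometry w e f.
Proof.
move=> e0 Hpf cu cv Nuv.
have Cuv : in_corner e (amul u v).
  by split; [rewrite amulA (corner_idl He cu) | rewrite -amulA (corner_idr He cv)].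
have Cn : in_corner e (e - amul u v).
  by rewrite -scaleN1r; apply: in_corner_add (in_corner_e He) (in_corner_scale _ Cuv).
have [g Hg] := left_inv_subr_cnilpotent He Cn Nuv; rewrite opprB addrC subrK in Hg.
exists (amul (amul e g) u); apply: partial_isometry_of_mul cv _ => //.
  by exists (amul g u); rewrite -!amulA (corner_idr Hf cu).
by rewrite -!amulA Hg He.
Qed.

End PartialIsometries.

Lemma AUF_irreducible_quotient_Ae (A : nualgType) (M : numodType A) :
  AUF A -> irreducible M -> quasicoherent M ->
  exists2 e : A, primitive e & exists p : AeT e -> M, quotient_map (mrad (AeT e)) p.
Proof.
move=> HA Mirr Qc; have [[m m0] _] := Mirr.
have [E [HE Em]] := AUF_idempotent_acting HA Qc m0.
have not0m : ~ act (0 : A) m <> 0 by rewrite act0l.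
have split_m (g h : A) : act g m <> 0 -> act h m <> 0 \/ act (g - h) m <> 0.
  move=> gm; apply: NNPP => /not_or_and [/NNPP hm /NNPP hm'].
  by apply: gm; rewrite -(subrK h g) actDl hm hm' addr0.
have [e [Hpe em]] := primitive_below (AUF_fin_dim_corner HA E) HE
  (Q := fun g => act g m <> 0) Em not0m (fun g h _ _ _ => split_m g h).
by exists e => //; exact: (quotient_map_onto Hpe (AUF_fin_dim_corner HA e) Mirr em).
Qed.

Lemma common_quotient_of_iso (A : nualgType) (M M' : numodType A) :
  isomorphic M M' ->
  exists (N : numodType A) (p : M -> N) (q : M' -> N),
    quotient_map (mrad M) p /\ quotient_map (mrad M') q.
Proof.
move=> [phi [Hphi [psi phiK psiK]]].
have [N [p Hp]] := quotient_exists (submodule_mrad M).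
exists N, p, (fun y => p (psi y)); split=> //.
apply: (quotient_map_iso (is_hom_inv Hphi phiK psiK) _ Hp).
by exists phi.
Qed.

Section CommonQuotient.
Variables (A : nualgType) (e f : A) (N : numodType A).
Variables (p : AeT e -> N) (q : AeT f -> N).
Hypotheses (Hpe : primitive e) (Hfin : fin_dim (corner e e)) (Hf : Defs.idempotent f).
Hypotheses (Hp : quotient_map (mrad (AeT e)) p).
Hypotheses (Hq : is_hom q) (q_surj : forall y, exists x, q x = y).
Let He : Defs.idempotent e. Proof. by case: Hpe. Qed.

(* Lifting p e and q f through q and p gives u in eAf and v in fAe with
   p (uv - e) = 0, i.e. uv - e in rad(Ae). *)
Lemma unipotent_of_common_quotient :
  exists u v, [/\ corner e f u, corner f e v & cnilpotent e (e - amul u v)].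
Proof.
have [Hpm p_surj pK] := Hp.
have [y qy] := q_surj (p (Ae_gen He)); have [x px] := p_surj (q (Ae_gen Hf)).
pose u := act e y; pose v := act f x.
exists (val u), (val v); split.
- by exists (val y); rewrite /= -amulA Ae_mulr.
- by exists (val x); rewrite /= -amulA Ae_mulr.
have qu : q u = p (Ae_gen He) by rewrite homA // qy -homA // act_e_Ae_gen.
have pv : p v = q (Ae_gen Hf) by rewrite homA // px -homA // act_e_Ae_gen.
have : p (act (val u) v - Ae_gen He) = 0.
  by rewrite homB // homA // pv -homA // act_Ae_gen qu subrr.
move=> /pK /(mradE Hpe Hfin) /(_ e) /(cnilpotentZ (-1)).
have eu : amul e (val u) = val u by rewrite /= amulA He.
have euv : amul e (amul (val u) (val v) - e) = amul (val u) (val v) - e.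
  by rewrite amulBr amulA eu He.
by rewrite [val _]/= !euv scaleN1r opprB.
Qed.

Lemma partial_isometry_of_common_quotient : primitive f ->
  exists u, partial_isometry u e f.
Proof.
move=> Hpf; have [_ e0 _] := Hpe.
have [u [v [cu cv Nuv]]] := unipotent_of_common_quotient.
exact: (partial_isometry_of_unipotent He Hf e0 Hpf cu cv Nuv).
Qed.

End CommonQuotient.

Theorem theorem5p5 (A : nualgType) :
  AUF A ->
  (* 1. Ae -> Ae/rad(Ae) is a projective cover of the irreducible coherent
        module Ae/rad(Ae) *)
  [/\ (forall (e : A), primitive e ->
         forall (N : numodType A) (p : AeT e -> N),
           quotient_map (mrad (AeT e)) p ->
           [/\ projective_cover p, irreducible N & coherent N]),
  (* 2. every irreducible quasicoherent module is some Ae/rad(Ae) *)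
      (forall M : numodType A, irreducible M -> quasicoherent M ->
         exists2 e : A, primitive e &
           exists p : AeT e -> M, quotient_map (mrad (AeT e)) p) &
  (* 3. (a) <-> (b) <-> (c) *)
      (forall e f : A, primitive e -> primitive f ->
         (isomorphic (AeT e) (AeT f) <->
            exists (N : numodType A) (p : AeT e -> N) (q : AeT f -> N),
              quotient_map (mrad (AeT e)) p /\ quotient_map (mrad (AeT f)) q) /\
         ((exists (N : numodType A) (p : AeT e -> N) (q : AeT f -> N),
              quotient_map (mrad (AeT e)) p /\ quotient_map (mrad (AeT f)) q) <->
            exists u : A, partial_isometry u e f))].
Proof.
move=> HA; have Hfin := AUF_fin_dim_corner HA; split.
- move=> e Hpe N p Hp; have [Hpm p_surj _] := Hp; have [He _ _] := Hpe.
  split; first exact: (projective_cover_Ae Hpe (Hfin e) Hp).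
    exact: (irreducible_quotient_Ae Hpe (Hfin e) Hp).
  split; last exact: (fin_generated_image_Ae He Hpm p_surj).
  exact: (quasicoherent_image Hpm p_surj (@quasicoherent_Ae _ e (AUF_local_unit HA))).
- by move=> M; apply: AUF_irreducible_quotient_Ae.
move=> e f Hpe Hpf; have [He _ _] := Hpe; have [Hf _ _] := Hpf.
have b_c : (exists (N : numodType A) (p : AeT e -> N) (q : AeT f -> N),
    quotient_map (mrad (AeT e)) p /\ quotient_map (mrad (AeT f)) q) ->
    exists u, partial_isometry u e f.
  move=> [N [p [q [Hp [Hq q_surj _]]]]].
  exact: (partial_isometry_of_common_quotient Hpe (Hfin e) Hf Hp Hq q_surj Hpf).
have c_a := @iso_of_partial_isometry _ e f He Hf.
split; split.
- exact: common_quotient_of_iso.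
- by move/b_c => [u /c_a].
- exact: b_c.
- by move=> [u /c_a /common_quotient_of_iso].
Qed.
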